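(* Let $K$ be a valued field, $d\ge 1$ and $S\subseteq K^d$ convex. (1) If $0\in S$ and $S=\operatorname{conv}(Y)$ for some finite $Y$, then $S$ is generated as an $\mathcal{O}_K$-module by a finite $K$-linearly independent set of vectors. (2) If $L$ is a valued field extension of $K$ (i.e. $K\subseteq L$ and $\nu_L$ restricted to $K$ equals $\nu_K$), then $\operatorname{conv}_{L^d}(S)\cap K^d=S$, where $\operatorname{conv}_{L^d}(S)$ denotes the convex hull of $S$ computed in $L^d$ with respect to $\mathcal{O}_L$.
   Context: For a valued field $F$ with valuation $\nu_F$, $\mathcal{O}_F=\{x\in F:\nu_F(x)\ge0\}$. A set $X\subseteq F^d$ is convex (over $F$) if it is closed under combinations $\sum_{i=1}^n\alpha_ix_i$ with $x_i\in X$, $\alpha_i\in\mathcal{O}_F$, $\sum\alpha_i=1$; $\operatorname{conv}$ denotes the smallest convex superset, i.e. the set of all such combinations. *)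

From HB Require Import structures.
From mathcomp Require Import all_boot all_order all_algebra.
Set Implicit Arguments. Unset Strict Implicit. Unset Printing Implicit Defensive.
Import Order.TTheory GRing.Theory.
Local Open Scope ring_scope.

Definition ordered_group (G : zmodType) (le : rel G) : Prop :=
  [/\ (forall a, le a a),
      (forall a b, le a b -> le b a -> a = b),
      (forall a b c, le a b -> le b c -> le a c),
      (forall a b, le a b || le b a)
    & (forall a b c, le a b -> le (a + c) (b + c))].

(* Order on G ∪ {∞}, ∞ represented by None (the top element). *)
Definition vle (G : zmodType) (le : rel G) (x y : option G) : bool :=
  match x, y with
  | _, None => true
  | None, Some _ => false
  | Some a, Some b => le a b
  end.

Definition vadd (G : zmodType) (x y : option G) : option G :=
  match x, y with
  | Some a, Some b => Some (a + b)
  | _, _ => None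
  end.

Definition is_valuation (F : fieldType) (G : zmodType) (le : rel G)
    (v : F -> option G) : Prop :=
  [/\ ordered_group le,
      (forall x, v x = None <-> x = 0),
      (forall x y, v (x * y) = vadd (v x) (v y))
    & (forall x y, vle le (v x) (v y) -> vle le (v x) (v (x + y)))].

Definition vring (F : fieldType) (G : zmodType) (le : rel G)
    (v : F -> option G) (x : F) : Prop := vle le (Some 0) (v x).

Definition is_convex_comb (F : fieldType) (G : zmodType) (le : rel G)
    (v : F -> option G) (d : nat) (X : 'rV[F]_d -> Prop) (z : 'rV[F]_d) : Prop :=
  exists n (x : 'I_n -> 'rV[F]_d) (a : 'I_n -> F),
    [/\ (forall i, X (x i)), (forall i, vring le v (a i)),
        \sum_(i < n) a i = 1 & z = \sum_(i < n) a i *: x i].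

Definition convex (F : fieldType) (G : zmodType) (le : rel G)
    (v : F -> option G) (d : nat) (X : 'rV[F]_d -> Prop) : Prop :=
  forall z, is_convex_comb le v X z -> X z.

Definition conv (F : fieldType) (G : zmodType) (le : rel G)
    (v : F -> option G) (d : nat) (X : 'rV[F]_d -> Prop) : 'rV[F]_d -> Prop :=
  fun z => is_convex_comb le v X z.

Definition lin_indep (F : fieldType) (d m : nat) (b : 'I_m -> 'rV[F]_d) : Prop :=
  forall c : 'I_m -> F, \sum_(i < m) c i *: b i = 0 -> forall i, c i = 0.

Definition Ospan (F : fieldType) (G : zmodType) (le : rel G)
    (v : F -> option G) (d m : nat) (b : 'I_m -> 'rV[F]_d) : 'rV[F]_d -> Prop :=
  fun z => exists c : 'I_m -> F, (forall i, vring le v (c i)) /\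
                                 z = \sum_(i < m) c i *: b i.

From mathcomp Require Import all_boot all_order all_algebra.
From Stdlib Require Import Classical.
Import GRing.Theory.
Local Open Scope ring_scope.
Set Implicit Arguments. Unset Strict Implicit.

(* Both parts are reduced to facts about O-spans, i.e. O-modules generated by
   a finite family of vectors.
   - A convex set S containing a point s0 is closed under the affine
     O-combinations s0 + sum_i e_i (s_i - s0) of its points; with s0 = 0 this
     says that S contains the O-span of any finite family of its points.
   - Every finite family can be shrunk to a K-linearly independent one with
     the same O-span: in a linear relation sum_i c_i b_i = 0, the vector b_i
     whose coefficient has minimal valuation is an O-combination of the
     others and can be dropped.
   (1) If 0 in S = conv(Y), then S is the O-span of Y; shrink Y.
   (2) Write a point f(z) of the L-hull as f(s0) + an O_L-combination of the
       f(s_i - s0); choose a K-independent family b with the same O_K-span as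
       the s_i - s0.  Coordinates in an L-combination of the K-independent
       f(b_j) of a vector of K^d lie in K (the coordinate map is a K-matrix),
       and their valuations are those of K, so z - s0 is in the O_K-span of
       the s_i - s0, hence z is in S by convexity. *)

Lemma exists_min (T : Type) (r : rel T) (I : finType) (g : I -> T) (i0 : I) :
  (forall x, r x x) -> (forall x y z, r x y -> r y z -> r x z) ->
  (forall x y, r x y || r y x) ->
  exists i, forall j, r (g i) (g j).
Proof.
move=> rR rT rTot.
suff [i Hi] : exists i, forall j, j \in enum I -> r (g i) (g j).
  by exists i => j; apply: Hi; rewrite mem_enum.
elim: (enum I) => [|x s [i Hi]]; first by exists i0.
have [Hxi|Hix] := orP (rTot (g x) (g i)).
  by exists x => j; rewrite inE => /orP [/eqP->|/Hi]; [apply: rR | apply: rT].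
by exists i => j; rewrite inE => /orP [/eqP->|/Hi].
Qed.

Section Valuation.
Variables (F : fieldType) (G : zmodType) (le : rel G) (v : F -> option G).
Hypothesis hv : is_valuation le v.

Let og : ordered_group le. Proof. by case: hv. Qed.
Let leR a : le a a. Proof. by case: og => H _ _ _ _; apply: H. Qed.
Let leA a b : le a b -> le b a -> a = b. Proof. by case: og => _ H _ _ _; apply: H. Qed.
Let leT a b c : le a b -> le b c -> le a c. Proof. by case: og => _ _ H _ _; apply: H. Qed.
Let leTot a b : le a b || le b a. Proof. by case: og => _ _ _ H _; apply: H. Qed.
Let leD a b c : le a b -> le (a + c) (b + c).
Proof. by case: og => _ _ _ _ H; apply: H. Qed.

Lemma vleR x : vle le x x. Proof. by case: x => //= a; apply: leR. Qed.
Lemma vleT x y z : vle le x y -> vle le y z -> vle le x z.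
Proof. by case: x; case: y; case: z => //= a b c; apply: leT. Qed.
Lemma vleTot x y : vle le x y || vle le y x.
Proof. by case: x; case: y => //= a b; apply: leTot. Qed.

Lemma v_eq_None x : v x = None <-> x = 0. Proof. by case: hv. Qed.
Lemma vM x y : v (x * y) = vadd (v x) (v y). Proof. by case: hv. Qed.
Lemma vD x y : vle le (v x) (v y) -> vle le (v x) (v (x + y)).
Proof. by case: hv => _ _ _; apply. Qed.

Lemma v0 : v 0 = None. Proof. exact/v_eq_None. Qed.

(* v 1 = v 1 + v 1 forces v 1 = 0; and v (-1) + v (-1) = v 1 = 0 forces
   v (-1) = 0 since an ordered group has no elements of order 2. *)
Lemma v1 : v 1 = Some 0.
Proof.
have : v 1 = vadd (v 1) (v 1) by rewrite -vM mulr1.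
case E: (v 1) => [g|] /=.
  by move=> [] /(congr1 (fun t => t - g)); rewrite addrK subrr => ->.
by move: E => /v_eq_None /eqP; rewrite oner_eq0.
Qed.

Lemma vN1 : v (-1) = Some 0.
Proof.
have : Some 0 = vadd (v (-1)) (v (-1)) by rewrite -vM mulrNN mulr1 v1.
case: (v (-1)) => [g|] //= [] gg0; congr Some.
have [g_ge0|g_le0] := orP (leTot 0 g).
  by have := leD g g_ge0; rewrite add0r -gg0 => /leA ->.
by have := leD g g_le0; rewrite add0r -gg0 => /(leA g_le0).
Qed.

Lemma vN x : v (- x) = v x.
Proof. by rewrite -mulN1r vM vN1; case: (v x) => //= a; rewrite add0r. Qed.

Lemma vring1 : vring le v 1. Proof. by rewrite /vring v1 /= leR. Qed.
Lemma vring0 : vring le v 0. Proof. by rewrite /vring v0. Qed.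

Lemma vringM x y : vring le v x -> vring le v y -> vring le v (x * y).
Proof.
rewrite /vring vM; case: (v x) => [a|] //; case: (v y) => [b|] //= Ha Hb.
by apply: leT Ha _; rewrite -[a in le a _]addr0 addrC [a + b]addrC; apply: leD.
Qed.

Lemma vringD x y : vring le v x -> vring le v y -> vring le v (x + y).
Proof.
rewrite /vring; have [Hxy|Hyx] := orP (vleTot (v x) (v y)).
  by move=> Hx _; apply: vleT Hx (vD Hxy).
by move=> _ Hy; rewrite addrC; apply: vleT Hy (vD Hyx).
Qed.

Lemma vringN x : vring le v x -> vring le v (- x).
Proof. by rewrite /vring vN. Qed.

Lemma vring_sum n (c : 'I_n -> F) :
  (forall i, vring le v (c i)) -> vring le v (\sum_i c i).
Proof. by move=> H; apply: big_ind => //; [apply: vring0 | apply: vringD]. Qed.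

Lemma vring_div x c : c != 0 -> vle le (v c) (v x) -> vring le v (x / c).
Proof.
move=> c0; rewrite -{1}(divfK c0 x) vM /vring.
case Ec: (v c) => [a|]; last by move/v_eq_None/eqP: Ec; rewrite (negPf c0).
case: (v (x / c)) => [g|] //= /(leD (- a)); by rewrite addrK subrr.
Qed.

Section OSpan.
Variable d : nat.

Lemma Ospan_comb m (b : 'I_m -> 'rV[F]_d) n (x : 'I_n -> 'rV_d) (a : 'I_n -> F) :
  (forall i, Ospan le v b (x i)) -> (forall i, vring le v (a i)) ->
  Ospan le v b (\sum_i a i *: x i).
Proof.
move=> Hx Ha; have [c Hc] := fin_all_exists Hx.
exists (fun j => \sum_i a i * c i j); split.
  by move=> j; apply: vring_sum => i; apply: vringM; [apply: Ha | apply: (proj1 (Hc i))].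
under eq_bigr => i _ do rewrite (proj2 (Hc i)) scaler_sumr.
rewrite exchange_big; apply: eq_bigr => j _; rewrite scaler_suml.
by apply: eq_bigr => i _; rewrite scalerA.
Qed.

Lemma Ospan_gen m (b : 'I_m -> 'rV[F]_d) k : Ospan le v b (b k).
Proof.
exists (fun j => (j == k)%:R); split.
  by move=> j; case: (j == k); [apply: vring1 | apply: vring0].
rewrite (bigD1 k) //= eqxx scale1r big1 ?addr0 // => j /negPf ->.
by rewrite scale0r.
Qed.

Lemma Ospan_drop n (w : 'I_n.+1 -> 'rV[F]_d) i (e : 'I_n -> F) :
  (forall j, vring le v (e j)) -> w i = \sum_j e j *: w (lift i j) ->
  forall z, Ospan le v w z <-> Ospan le v (fun j => w (lift i j)) z.
Proof.
move=> He Hw z; split.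
  case=> c [Hc ->]; exists (fun j => c i * e j + c (lift i j)); split.
    by move=> j; apply: vringD => //; apply: vringM.
  rewrite (bigD1_ord i) //= Hw scaler_sumr -big_split /=.
  by apply: eq_bigr => j _; rewrite scalerA scalerDl.
case=> c [Hc ->]; exists (fun k => if unlift i k is Some j then c j else 0); split.
  by move=> k; case: (unlift i k) => [j|] //; apply: vring0.
rewrite (bigD1_ord i) //= unlift_none scale0r add0r.
by apply: eq_bigr => j _; rewrite liftK.
Qed.

(* In a nontrivial linear relation, the generator whose coefficient has
   minimal valuation is an O-combination of the other generators. *)
Lemma Ospan_drop_dependent n (w : 'I_n.+1 -> 'rV[F]_d) :
  ~ lin_indep w ->
  exists i, forall z, Ospan le v w z <-> Ospan le v (fun j => w (lift i j)) z.
Proof.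
move=> /not_all_ex_not [c Hc].
have [Hsum /not_all_ex_not [k ck0]] := imply_to_and _ _ Hc.
have [i Hi] := exists_min (fun j => v (c j)) k vleR vleT vleTot.
have ci0 : c i != 0.
  apply/eqP => ci0; have := Hi k; rewrite /= ci0 v0.
  by case E: (v (c k)) => //; move/v_eq_None: E.
exists i; apply: (@Ospan_drop _ _ _ (fun j => - (c (lift i j) / c i))).
  by move=> j; apply/vringN/vring_div.
move: Hsum; rewrite (bigD1_ord i) //= => /eqP; rewrite addr_eq0 => /eqP Hci.
rewrite -[w i]scale1r -(mulVf ci0) -scalerA Hci scalerN scaler_sumr -sumrN.
by apply: eq_bigr => j _; rewrite scalerA -scaleNr mulrC.
Qed.

Lemma Ospan_indep_basis n (w : 'I_n -> 'rV[F]_d) :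
  exists m (b : 'I_m -> 'rV[F]_d), lin_indep b /\
    forall z, Ospan le v w z <-> Ospan le v b z.
Proof.
elim: n w => [|n IH] w.
  by exists 0%N, w; split=> // c _ [].
have [Hw|/Ospan_drop_dependent [i Hi]] := classic (lin_indep w).
  by exists n.+1, w.
have [m [b [Hb Hspan]]] := IH (fun j => w (lift i j)).
by exists m, b; split=> // z; rewrite Hi.
Qed.

Lemma convex_affine (S : 'rV[F]_d -> Prop) s0 n (s : 'I_n -> 'rV_d) (e : 'I_n -> F) :
  convex le v S -> S s0 -> (forall i, S (s i)) -> (forall i, vring le v (e i)) ->
  S (s0 + \sum_i e i *: (s i - s0)).
Proof.
move=> hS S0 Ss He; apply: hS.
exists n.+1, (fun k => if unlift ord0 k is Some j then s j else s0),
  (fun k => if unlift ord0 k is Some j then e j else 1 - \sum_i e i).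
split.
- by move=> k; case: (unlift ord0 k).
- move=> k; case: (unlift ord0 k) => [j|]; first exact: He.
  by apply: vringD; [apply: vring1 | apply/vringN/vring_sum].
- rewrite (bigD1_ord ord0) //= unlift_none.
  by under [X in _ + X]eq_bigr do rewrite liftK; rewrite subrK.
- rewrite (bigD1_ord ord0) //= unlift_none.
  under [X in _ = _ + X]eq_bigr do rewrite liftK.
  under eq_bigr do rewrite scalerBr.
  by rewrite sumrB -scaler_suml scalerBl scale1r addrA addrAC.
Qed.

Lemma convex_Ospan (S : 'rV[F]_d -> Prop) m (b : 'I_m -> 'rV_d) z :
  convex le v S -> S 0 -> (forall i, S (b i)) -> Ospan le v b z -> S z.
Proof.
move=> hS S0 Sb [c [Hc ->]].
rewrite -[X in S X]add0r; under eq_bigr do rewrite -[b _]subr0.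
exact: convex_affine.
Qed.

Lemma conv_origin_Ospan (S : 'rV[F]_d -> Prop) (Y : seq 'rV[F]_d) :
  convex le v S -> S 0 -> (forall z, S z <-> conv le v (fun y => y \in Y) z) ->
  forall z, S z <-> Ospan le v (fun i : 'I_(size Y) => Y`_i) z.
Proof.
move=> hS S0 HY z; split.
  move=> /HY [n [x [a [Hx Ha _ ->]]]]; apply: Ospan_comb => // i.
  have /(nthP 0) [k Hk <-] := Hx i.
  exact: (Ospan_gen _ (Ordinal Hk)).
apply: convex_Ospan => // i; apply/HY.
exists 1%N, (fun _ => Y`_i), (fun _ => 1).
by split=> [_|_||]; rewrite ?mem_nth ?big_ord1 ?scale1r //; apply: vring1.
Qed.

End OSpan.
End Valuation.

Section Extension.
Variables (K L : fieldType) (f : {rmorphism K -> L}) (d : nat).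

Lemma comb_mulmx (R : fieldType) m (c : 'I_m -> R) (b : 'I_m -> 'rV[R]_d) :
  \sum_j c j *: b j = (\row_j c j) *m (\matrix_j b j).
Proof. by rewrite mulmx_sum_row; apply: eq_bigr => j _; rewrite rowK mxE. Qed.

Lemma lin_indep_row_free (R : fieldType) m (b : 'I_m -> 'rV[R]_d) :
  lin_indep b -> row_free (\matrix_j b j).
Proof.
move=> Hb; rewrite -kermx_eq0; apply/eqP/row_matrixP => i; rewrite row0.
set r := row i (kermx _).
have r_rel : \sum_j r 0 j *: b j = 0.
  rewrite comb_mulmx; have -> : \row_j r 0 j = r by apply/rowP => j; rewrite mxE.
  by rewrite /r -row_mul mulmx_ker row0.
by apply/rowP => j; rewrite (Hb _ r_rel j) mxE.
Qed.

(* Descent of coordinates: if f(u) is an L-combination of the images of a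
   K-independent family b, then the coefficients are images of K-coefficients
   expressing u.  (b has a right inverse matrix C over K, and the coefficient
   vector is f(u) C = f(u C).) *)
Lemma coords_descend m (b : 'I_m -> 'rV[K]_d) (u : 'rV[K]_d) (g : 'I_m -> L) :
  lin_indep b -> map_mx f u = \sum_j g j *: map_mx f (b j) ->
  exists c : 'I_m -> K, (forall j, g j = f (c j)) /\ u = \sum_j c j *: b j.
Proof.
move=> /lin_indep_row_free /row_freeP [C HC].
have map_rows : \matrix_j map_mx f (b j) = map_mx f (\matrix_j b j).
  by apply/row_matrixP => j; rewrite -map_row !rowK.
rewrite comb_mulmx map_rows => Hu.
have Hg : map_mx f (u *m C) = \row_j g j.
  by rewrite map_mxM Hu -mulmxA -map_mxM HC map_mx1 mulmx1.
exists (fun j => (u *m C) 0 j); split.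
  by move=> j; have := congr1 (fun M : 'rV[L]_m => M 0 j) Hg; rewrite !mxE.
apply: (@map_mx_inj _ _ f); rewrite comb_mulmx map_mxM Hu -Hg.
by rewrite (_ : \row_j _ = u *m C) //; apply/rowP => j; rewrite mxE.
Qed.

Variables (G : zmodType) (le : rel G) (vK : K -> option G) (vL : L -> option G).
Hypotheses (hvK : is_valuation le vK) (hvL : is_valuation le vL).
Hypothesis vLf : forall x, vL (f x) = vK x.

Lemma Ospan_map m (b : 'I_m -> 'rV[K]_d) u :
  Ospan le vK b u -> Ospan le vL (fun j => map_mx f (b j)) (map_mx f u).
Proof.
case=> c [Hc ->]; exists (fun j => f (c j)); split.
  by move=> j; rewrite /vring vLf; apply: Hc.
by rewrite map_mx_sum; apply: eq_bigr => j _; rewrite map_mxZ.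
Qed.

Lemma Ospan_descend m (b : 'I_m -> 'rV[K]_d) u :
  lin_indep b -> Ospan le vL (fun j => map_mx f (b j)) (map_mx f u) ->
  Ospan le vK b u.
Proof.
move=> Hb [g [Hg /(coords_descend Hb) [c [Hcg ->]]]].
by exists c; split=> // j; have := Hg j; rewrite /vring Hcg vLf.
Qed.

Lemma conv_extension_descends (S : 'rV[K]_d -> Prop) z :
  convex le vK S ->
  conv le vL (fun w => exists2 s, S s & w = map_mx f s) (map_mx f z) -> S z.
Proof.
move=> hS [[|n] [x [a [Hx Ha Hsum Hz]]]].
  by move: Hsum; rewrite big_ord0 => /eqP; rewrite eq_sym oner_eq0.
have [s Hs] := fin_all_exists (fun i =>
  let: ex_intro2 si Ssi xi := Hx i in ex_intro _ si (conj Ssi xi)).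
pose s0 := s ord0; pose w i := s i - s0.
have [m [b [Hb Hwb]]] := Ospan_indep_basis hvK w.
have shift_image : map_mx f (z - s0) = \sum_i a i *: map_mx f (w i).
  rewrite map_mxB Hz -[map_mx f s0]scale1r -Hsum scaler_suml -sumrB.
  by apply: eq_bigr => i _; rewrite /w map_mxB (proj2 (Hs i)) scalerBr.
have [e [He Hze]] : Ospan le vK w (z - s0).
  apply/Hwb; apply: (Ospan_descend Hb); rewrite shift_image.
  apply: (Ospan_comb hvL) => // i; apply: Ospan_map.
  by apply/Hwb; apply: Ospan_gen.
rewrite -[z](subrK s0) addrC Hze.
by apply: (convex_affine hvK) => // [|i]; apply: (proj1 (Hs _)).
Qed.

End Extension.

Unset Implicit Arguments.
Theorem lemma4p2 (K : fieldType) (G : zmodType) (le : rel G)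
    (vK : K -> option G) (hvK : is_valuation le vK)
    (d : nat) (hd : (0 < d)%N) (S : 'rV[K]_d -> Prop) (hS : convex le vK S) :
  (* (1) *)
  ((S 0 -> (exists Y : seq 'rV[K]_d, forall z, S z <-> conv le vK (fun y => y \in Y) z) ->
     exists m (b : 'I_m -> 'rV[K]_d),
       lin_indep b /\ forall z, S z <-> Ospan le vK b z)
  /\
  (* (2) *)
  (forall (L : fieldType) (f : {rmorphism K -> L}) (vL : L -> option G),
     is_valuation le vL -> (forall x, vL (f x) = vK x) ->
     forall z : 'rV[K]_d,
       conv le vL (fun w => exists2 s, S s & w = map_mx f s) (map_mx f z) <-> S z)).
Proof.
split.
  move=> S0 [Y HY].
  have [m [b [Hb Hspan]]] := Ospan_indep_basis hvK (fun i : 'I_(size Y) => Y`_i).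
  exists m, b; split=> // z.
  by rewrite (conv_origin_Ospan hvK hS S0 HY); apply: Hspan.
move=> L f vL hvL vLf z; split; first exact: (conv_extension_descends hvK hvL vLf hS).
move=> Sz; exists 1%N, (fun _ => map_mx f z), (fun _ => 1).
by split=> [_|_||]; rewrite ?big_ord1 ?scale1r //; [exists z | apply: vring1].
Qed.
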